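(* Let $N \ge 1$ and let $W_N$ be the set of binary words of length $N$. Define $\varphi_6 : W_N \to W_N$ by $\varphi_6(u) = v\, 01011\, 0^p v'$ if $u = v 0^p 10110 v'$ where $p \geq 2$, $v'$ is a (possibly empty) word, and $v$ is a (possibly empty) word which is either empty or ends with the letter $1$ and such that $v 0^p$ does not contain $0010110$ as a contiguous subword; and $\varphi_6(u) = u$ otherwise. Then $|P(\varphi_6(u))| \leq |P(u)|$ for every $u \in W_N$.
   Context: For a binary word $x$, $x^j$ denotes $j$ concatenated copies of $x$, and juxtaposition denotes concatenation. For a binary word $w = w_1 \cdots w_\ell$ of length $\ell$, $P(w)$ is the set of indices $i \geq 2$ such that at least one of the following holds: (i) $\ell \geq i$ and $w_{i-1} w_i = 00$; (ii) $\ell \geq i+2$ and $w_{i-1} w_i w_{i+1} w_{i+2} = 0100$; (iii) $\ell \geq i+3$ and $w_{i-1} \cdots w_{i+3} = 01010$. *)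

(* Binary words are seq bool, letter 0 = false, letter 1 = true. *)
From mathcomp Require Import all_boot.
Set Implicit Arguments. Unset Strict Implicit. Unset Printing Implicit Defensive.

(* w_i (1-indexed), for 1 <= i <= size w *)
Definition letter (w : seq bool) (i : nat) : bool := nth false w i.-1.

Definition inP (w : seq bool) (i : nat) : bool :=
  let l := size w in
  (2 <= i) &&
  [|| (i <= l) && (~~ letter w i.-1) && (~~ letter w i)
    , (i + 2 <= l) && [&& ~~ letter w i.-1, letter w i,
                          ~~ letter w i.+1 & ~~ letter w i.+2]
    | (i + 3 <= l) && [&& ~~ letter w i.-1, letter w i, ~~ letter w i.+1,
                          letter w i.+2 & ~~ letter w i.+3] ].

(* |P(w)|: all elements of P(w) lie in [2, size w] *)
Definition cardP (w : seq bool) : nat := count (inP w) (iota 0 (size w).+1).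

Definition w10110 : seq bool := [:: true; false; true; true; false].
Definition w01011 : seq bool := [:: false; true; false; true; true].
Definition w0010110 : seq bool := [:: false; false; true; false; true; true; false].

(* u = v 0^p 10110 v' with v := take i u, p >= 2, v empty or ending in 1,
   and v 0^p not containing 0010110 *)
Definition phi6_dec (u : seq bool) (i p : nat) : bool :=
  let v := take i u in
  let rest := drop i u in
  [&& i <= size u, 2 <= p, take p rest == nseq p false,
      take 5 (drop p rest) == w10110, p + 5 <= size rest,
      (v == [::]) || (last false v == true)
    & ~~ infix w0010110 (v ++ nseq p false)].

Definition phi6 (u : seq bool) : seq bool :=
  match [pick ip : 'I_(size u).+1 * 'I_(size u).+1 | phi6_dec u ip.1 ip.2] with
  | Some ip =>
      let i := nat_of_ord ip.1 in let p := nat_of_ord ip.2 in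
      take i u ++ w01011 ++ nseq p false ++ drop (p + 5) (drop i u)
  | None => u
  end.

From mathcomp Require Import all_boot.

(* An index i lies in P(w) exactly when the suffix of w starting at letter
   i - 1 begins with 00, 0100 or 01010, so |P(w)| counts the suffixes of w
   beginning with one of these patterns.  In 0^p 10110 and in 01011 0^p such
   suffixes start exactly at the first p - 1 zeros and possibly at the final
   zero, which is followed by the same word in both.  A suffix starting inside
   v, which ends with 1, sees ...1 00 before and ...1 010 after the swap, and
   the three patterns do not distinguish these.  Hence phi6 even preserves
   |P|. *)

Definition startP (s : seq bool) : bool :=
  match s with
  | false :: false :: _
  | false :: true :: false :: false :: _
  | false :: true :: false :: true :: false :: _ => true
  | _ => false
  end.

Lemma inP_cons a t i : 1 < i -> inP (a :: t) i.+1 = inP t i.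
Proof. by case: i => [|[|i]] // _; rewrite /inP /letter /= !addSn !ltnS. Qed.

Lemma inP2 s : inP s 2 = startP s.
Proof. by case: s => [|[] [|[] [|[] [|[] [|[] s]]]]]. Qed.

Lemma cardP_cons a t : cardP (a :: t) = startP (a :: t) + cardP t.
Proof.
rewrite /cardP [X in X = _]/= [X in _ = _ + X]/= !add0n.
rewrite -[2]add1n iotaDl count_map.
case: t => [|b t]; first by case: a.
rewrite [X in X = _]/= [X in _ = _ + X]/= inP2 add0n; congr (_ + _).
by apply: eq_in_count => i; rewrite mem_iota => /andP[i_ge2 _] /=; rewrite add1n inP_cons.
Qed.

Lemma cardP_zeros q s : cardP (nseq q.+1 false ++ s) = q + cardP (false :: s).
Proof. by elim: q => //= q IHq; rewrite cardP_cons IHq. Qed.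

Lemma cardP_01011 s : cardP (w01011 ++ s) = cardP s.
Proof. by rewrite !cardP_cons. Qed.

Lemma cardP_010110 s : cardP (false :: w10110 ++ s) = cardP (false :: s).
Proof. by rewrite !cardP_cons. Qed.

Lemma cardP_zeros_swap q s :
  cardP (nseq q.+2 false ++ w10110 ++ s) = cardP (w01011 ++ nseq q.+2 false ++ s).
Proof. by rewrite cardP_01011 !cardP_zeros cardP_010110. Qed.

Lemma startP_swap t s1 s2 :
  startP (t ++ true :: false :: false :: s1) =
  startP (t ++ true :: false :: true :: false :: s2).
Proof. by case: t => [|[] [|[] [|[] [|[] [|[] t]]]]]. Qed.

Lemma cardP_swap_after_one t s1 s2 :
  cardP (false :: false :: s1) = cardP (false :: true :: false :: s2) ->
  cardP (rcons t true ++ false :: false :: s1) =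
  cardP (rcons t true ++ false :: true :: false :: s2).
Proof.
move=> eq_s; elim: t => [|a t IHt]; first by rewrite /= !(cardP_cons true) eq_s.
by rewrite rcons_cons /= !(cardP_cons a) IHt !cat_rcons -!cat_cons (startP_swap _ _ s2).
Qed.

(* [last true v] holds iff v is empty or ends with 1. *)
Lemma cardP_swap v p s : 1 < p -> last true v ->
  cardP (v ++ w01011 ++ nseq p false ++ s) = cardP (v ++ nseq p false ++ w10110 ++ s).
Proof.
case: p => [|[|q]] // _; case/lastP: v => [|t b]; first by rewrite cardP_zeros_swap.
rewrite last_rcons => -> {b}; symmetry.
exact: cardP_swap_after_one (cardP_zeros_swap q s).
Qed.

(* The condition that v 0^p avoids 0010110 only makes the decomposition unique;
   every decomposition works. *)
Lemma cardP_phi6 u : cardP (phi6 u) = cardP u.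
Proof.
rewrite /phi6; case: pickP => [[i p] /= | //].
case/and5P=> _ p_gt1 zeros_p w10110_p /and3P[_ last_v _].
have u_eq : u = take i u ++ nseq p false ++ w10110 ++ drop (p + 5) (drop i u).
  by rewrite (addnC p) -drop_drop -(eqP zeros_p) -(eqP w10110_p) !cat_take_drop.
rewrite [in RHS]u_eq; apply: cardP_swap p_gt1 _.
by case: (take i u) last_v => //= x v /eqP.
Qed.

Theorem lemma4p6 (N : nat) (hN : 1 <= N) (u : seq bool) (hu : size u = N) :
  cardP (phi6 u) <= cardP u.
Proof. by rewrite cardP_phi6. Qed.
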